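(* Let $(V,E)$ be a finite graph (multiple edges allowed, no self-loops) whose vertex set is a disjoint union $V=V_\partial\sqcup V_b$, and let $V_\partial=A\sqcup B\sqcup C$. Consider configurations $\{\pi_v\}_{v\in V}$ with $\pi_v\in S_4$, subject to the boundary conditions $\pi_v=\pi^{(1)}=(12)(34)$ for $v\in A$, $\pi_v=\pi^{(2)}=(13)(24)$ for $v\in B$, and $\pi_v=\mathrm{id}$ for $v\in C$, with energy $E(\{\pi_v\})=\sum_{e=(vw)\in E}d(\pi_v,\pi_w)$. Then every such configuration satisfies $E(\{\pi_v\})\ge 2m$, where $m$ is the minimal size $|\gamma_{ABC}|$ of a tripartition for $A,B,C$. If moreover the minimal tripartition $(\Gamma_A,\Gamma_B,\Gamma_C)$ is unique, then equality $E(\{\pi_v\})=2m$ holds if and only if $\pi_v=\pi^{(1)}$ for all $v\in\Gamma_A$, $\pi_v=\pi^{(2)}$ for all $v\in\Gamma_B$, and $\pi_v=\mathrm{id}$ for all $v\in\Gamma_C$.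
   Context: The Cayley distance on $S_n$ is $d(\pi,\sigma)=n-|C(\pi^{-1}\sigma)|$, where $|C(\tau)|$ is the number of disjoint cycles of $\tau$ including fixed points. A tripartition for $A,B,C$ is a partition $V=\Gamma_A\sqcup\Gamma_B\sqcup\Gamma_C$ with $V_\partial\cap\Gamma_A=A$, $V_\partial\cap\Gamma_B=B$, $V_\partial\cap\Gamma_C=C$; its edge set $\gamma_{ABC}$ is the set of edges of $E$ whose endpoints lie in two different parts, and its size is $|\gamma_{ABC}|$. A tripartition is minimal if $|\gamma_{ABC}|$ is minimal among all tripartitions for $A,B,C$. *)

From mathcomp Require Import all_boot all_fingroup.
Set Implicit Arguments. Unset Strict Implicit. Unset Printing Implicit Defensive.
Local Open Scope group_scope.

Definition cayley_dist (p s : 'S_4) : nat := (4 - #|porbits (p^-1 * s)|)%N.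

(* (12)(34) and (13)(24), written on {0,1,2,3} = 'I_4 (point k+1 is ordinal k). *)
Definition pi1 : 'S_4 :=
  tperm (inord 0 : 'I_4) (inord 1) * tperm (inord 2 : 'I_4) (inord 3).
Definition pi2 : 'S_4 :=
  tperm (inord 0 : 'I_4) (inord 2) * tperm (inord 1 : 'I_4) (inord 3).

Section Graph.
Variables (V Edg : finType) (src tgt : Edg -> V).

Definition energy (pi : V -> 'S_4) : nat :=
  \sum_(e : Edg) cayley_dist (pi (src e)) (pi (tgt e)).

Definition is_tripartition (A B C GA GB GC : {set V}) : Prop :=
  [/\ [disjoint GA & GB], [disjoint GA & GC], [disjoint GB & GC],
      GA :|: GB :|: GC = [set: V] &
      [/\ (A :|: B :|: C) :&: GA = A, (A :|: B :|: C) :&: GB = B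
        & (A :|: B :|: C) :&: GC = C]].

Definition cut_edges (GA GB GC : {set V}) : {set Edg} :=
  [set e | ~~ [|| (src e \in GA) && (tgt e \in GA),
                 (src e \in GB) && (tgt e \in GB)
               | (src e \in GC) && (tgt e \in GC)]].

Definition cut_size (GA GB GC : {set V}) : nat := #|cut_edges GA GB GC|.

Definition minimal_tripartition (A B C GA GB GC : {set V}) : Prop :=
  is_tripartition A B C GA GB GC /\
  forall GA' GB' GC', is_tripartition A B C GA' GB' GC' ->
    cut_size GA GB GC <= cut_size GA' GB' GC'.
End Graph.

From mathcomp Require Import all_boot all_fingroup cyclic zify.
Set Implicit Arguments. Unset Strict Implicit. Unset Printing Implicit Defensive.

(* For each point i the values pi1 i, pi2 i, i are distinct, so a permutation s
   can be rounded to the boundary permutation P with P i = s i, or to a default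
   X in {pi1, pi2} if there is none.  The 4 x 2 such roundings turn a
   configuration into 8 tripartitions for A, B, C, each cutting at least m
   edges.  A rounding at i changes only where s i changes, and s, t differ at
   no more than 2 d(s, t) points (a cycle of length L >= 2 moves L <= 2 (L - 1)
   points), so an edge is cut by at most 4 d of them: 8 m <= 4 E.
   At equality every rounding is a minimal, hence the unique, tripartition, and
   the rounding whose default differs from P recovers s = P point by point.
   Conversely pi1, pi2, id are pairwise at distance 2, so the configuration
   constant on the parts of the minimal tripartition has energy 2 m. *)

Lemma card_set_sum (T : finType) (P : pred T) : #|[set x | P x]| = \sum_x P x.
Proof. by rewrite -sum1dep_card big_mkcond; apply: eq_bigr => x _; case: (P x). Qed.

Lemma card_mul_le_sum (I : finType) (c : I -> nat) m :
  (forall i, m <= c i) -> #|I| * m <= \sum_i c i ?= iff [forall i, m == c i].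
Proof.
move=> le_m; rewrite -sum_nat_const.
exact: leqif_sum (fun i _ => leqif_eq (le_m i)).
Qed.

Section PermOrbits.
Variable T : finType.
Implicit Type s : {perm T}.

Lemma sum_porbits s (F : T -> nat) :
  \sum_x F x = \sum_(O in porbits s) \sum_(x in O) F x.
Proof.
rewrite (partition_big_imset (porbit s)) /=.
apply: eq_bigr => _ /imsetP[y _ ->]; apply: eq_bigl => x.
by rewrite eq_porbit_mem.
Qed.

Lemma sum_moved_porbit s y :
  \sum_(x in porbit s y) (s x != x) + 2 <= #|porbit s y|.*2.
Proof.
have [/forall_inP fixed | /forall_inPn[x xO moved]] :=
  boolP [forall x in porbit s y, s x == x].
  rewrite big1 => [|x /fixed ->] //.
  by rewrite -muln2 leq_pmull // lt0n card_porbit_neq0.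
have sxO : s x \in porbit s y.
  by rewrite -(eqP (etrans (eq_porbit_mem s x y) xO)) -[s x]/((s ^+ 1)%g x) mem_porbit.
have O_gt1 : 1 < #|porbit s y|.
  by apply/card_gt1P; exists x, (s x); rewrite xO sxO eq_sym.
rewrite -addnn leq_add // -sum1_card.
by apply: leq_sum => z _; case: (_ != _).
Qed.

Lemma card_moved_porbits s :
  #|[set x | s x != x]| + #|porbits s|.*2 <= #|T|.*2.
Proof.
have -> : #|T|.*2 = \sum_(x : T) 2 by rewrite sum_nat_const muln2.
have -> : #|porbits s|.*2 = \sum_(O in porbits s) 2 by rewrite sum_nat_const muln2.
rewrite card_set_sum !(sum_porbits s) -big_split /=.
apply: leq_sum => _ /imsetP[y _ ->].
by rewrite sum_nat_const muln2 sum_moved_porbit.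
Qed.

Lemma card_porbit_le_order s y : #|porbit s y| <= #[s]%g.
Proof. by rewrite porbit.unlock leq_imset_card. Qed.

Lemma card_le_order_porbits s : #|T| <= #[s]%g * #|porbits s|.
Proof.
have -> : #|T| = \sum_(x : T) 1 by rewrite sum1_card.
rewrite (sum_porbits s) mulnC -sum_nat_const.
by apply: leq_sum => _ /imsetP[y _ ->]; rewrite sum1_card card_porbit_le_order.
Qed.

End PermOrbits.

Local Open Scope group_scope.

Lemma card_neq_le_cayley_dist (s t : 'S_4) :
  #|[set i | s i != t i]| <= 2 * cayley_dist s t.
Proof.
have moved : s @: [set i | s i != t i] = [set x | (s^-1 * t) x != x].
  apply/setP => x; rewrite inE permM; apply/imsetP/idP => [[i] | moved].
    by rewrite inE => neq ->; rewrite permK eq_sym.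
  by exists (s^-1 x); rewrite ?inE permKV // eq_sym.
have := card_moved_porbits (s^-1 * t).
rewrite -moved card_imset ?card_ord /cayley_dist; last exact: perm_inj.
by rewrite -!muln2; lia.
Qed.

Lemma cayley_dist_refl (s : 'S_4) : cayley_dist s s = 0.
Proof.
have := card_le_order_porbits (1 : 'S_4).
by rewrite /cayley_dist mulVg order1 card_ord mul1n -subn_eq0 => /eqP.
Qed.

Lemma cayley_dist_le_involution (s t : 'S_4) :
  (s^-1 * t) ^+ 2 = 1 -> cayley_dist s t <= 2.
Proof.
move/eqP/order_inf => order_le2.
have := leq_trans (card_le_order_porbits (s^-1 * t)) (leq_mul order_le2 (leqnn _)).
by rewrite card_ord /cayley_dist; lia.
Qed.

Definition boundary_perms : seq 'S_4 := [:: pi1; pi2; 1].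

Lemma pi1E (i : 'I_4) : pi1 i = nth 0 [:: 1; 0; 3; 2]%N i :> nat.
Proof.
rewrite /pi1 permM !permE; case: i => -[|[|[|[|//]]]] lt.
all: by rewrite /= -!val_eqE /= !inordK.
Qed.

Lemma pi2E (i : 'I_4) : pi2 i = nth 0 [:: 2; 3; 0; 1]%N i :> nat.
Proof.
rewrite /pi2 permM !permE; case: i => -[|[|[|[|//]]]] lt.
all: by rewrite /= -!val_eqE /= !inordK.
Qed.

Lemma boundary_perms_neq (P Q : 'S_4) : P \in boundary_perms ->
  Q \in boundary_perms -> P != Q -> forall i, P i != Q i.
Proof.
rewrite !inE => /or3P[] /eqP-> /or3P[] /eqP-> //; rewrite ?eqxx // => _ i.
all: by rewrite -val_eqE /= ?perm1 ?pi1E ?pi2E; case: i => -[|[|[|[|//]]]] lt.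
Qed.

Lemma boundary_perms_distinct : [&& pi1 != pi2, pi1 != 1 & pi2 != 1].
Proof.
apply/and3P; split.
all: by apply/eqP => /permP/(_ ord0)/eqP; rewrite -val_eqE /= ?perm1 ?pi1E ?pi2E.
Qed.

Lemma boundary_perm_sqr P : P \in boundary_perms -> P ^+ 2 = 1.
Proof.
rewrite !inE => /or3P[] /eqP-> //; last exact: expg1n.
all: apply/permP => i; apply: ord_inj; rewrite expgS expg1 permM perm1.
all: by case: i => -[|[|[|[|//]]]] lt; rewrite /= ?pi1E ?pi2E /= ?pi1E ?pi2E.
Qed.

Lemma boundary_perms_commute P Q :
  P \in boundary_perms -> Q \in boundary_perms -> commute P Q.
Proof.
have pi12 : commute pi1 pi2.
  apply/permP => i; apply: ord_inj.
  rewrite [(pi1 * pi2) i]permM [(pi2 * pi1) i]permM.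
  by case: i => -[|[|[|[|//]]]] lt; rewrite /= ?pi1E ?pi2E /= ?pi1E ?pi2E.
rewrite !inE => /or3P[] /eqP-> /or3P[] /eqP->.
all: by [exact: commute_refl | exact: commute1 | exact/commute_sym/commute1
        | exact: commute_sym].
Qed.

Lemma cayley_dist_boundary P Q : P \in boundary_perms -> Q \in boundary_perms ->
  cayley_dist P Q = (2 * (P != Q))%N.
Proof.
move=> bP bQ; have [<- | neqPQ] := eqVneq P Q; first exact: cayley_dist_refl.
apply/eqP; rewrite eqn_leq cayley_dist_le_involution /=; last first.
  rewrite expgMn; last exact/commute_sym/commuteV/boundary_perms_commute.
  by rewrite expVgn !boundary_perm_sqr ?invg1 ?mul1g.
have all_neq : [set i | P i != Q i] = [set: 'I_4].
  by apply/setP => i; rewrite !inE (boundary_perms_neq bP bQ neqPQ).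
by have := card_neq_le_cayley_dist P Q; rewrite all_neq cardsT card_ord; lia.
Qed.

Definition snap_at (X : 'S_4) (i : 'I_4) (s : 'S_4) : 'S_4 :=
  nth X boundary_perms (find (fun P : 'S_4 => s i == P i) boundary_perms).

Section SnapAt.
Variables (X : 'S_4) (i : 'I_4).

Lemma snap_at_boundary P : P \in boundary_perms -> snap_at X i P = P.
Proof.
move=> bP; rewrite /snap_at (@eq_in_find _ _ (pred1 P)) ?nth_index // => Q bQ /=.
apply/eqP/eqP => [|-> //]; apply: contra_eq; rewrite eq_sym => neqPQ.
exact: boundary_perms_neq bP bQ neqPQ i.
Qed.

Lemma snap_at_in s : X \in boundary_perms -> snap_at X i s \in boundary_perms.
Proof.
rewrite /snap_at; set j := find _ _.
by have [/(mem_nth X) | /(nth_default X) ->] := ltnP j (size boundary_perms).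
Qed.

Lemma snap_at_pinned s P : X != P -> snap_at X i s = P -> s i = P i.
Proof.
rewrite /snap_at.
have [agree | disagree] := boolP (has (fun P : 'S_4 => s i == P i) boundary_perms).
  by move=> _ <-; exact/eqP/(nth_find X agree).
rewrite nth_default => [neqXP eqXP|]; first by rewrite eqXP eqxx in neqXP.
by rewrite leqNgt -has_find.
Qed.

End SnapAt.

Definition snap (k : 'I_4 * bool) : 'S_4 -> 'S_4 :=
  snap_at (if k.2 then pi1 else pi2) k.1.

Lemma snap_in k s : snap k s \in boundary_perms.
Proof. by apply: snap_at_in; case: k.2; rewrite !inE eqxx ?orbT. Qed.

Lemma snap_boundary k P : P \in boundary_perms -> snap k P = P.
Proof. exact: snap_at_boundary. Qed.

Lemma snap_const s P : P \in boundary_perms -> (forall k, snap k s = P) -> s = P.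
Proof.
move=> bP snapP; apply/permP => i.
have neqP : (if P != pi1 then pi1 else pi2) != P.
  have /and3P[neq12 _ _] := boundary_perms_distinct.
  by have [->|neqP1] := eqVneq P pi1; rewrite 1?eq_sym.
exact: snap_at_pinned neqP (snapP (i, P != pi1)).
Qed.

Lemma sum_snap_neq_le (s t : 'S_4) :
  \sum_k (snap k s != snap k t) <= 4 * cayley_dist s t.
Proof.
have snap_le : \sum_k (snap k s != snap k t) <= \sum_i \sum_(b : bool) (s i != t i).
  rewrite pair_bigA; apply: leq_sum => -[i b] _ /=.
  have [eq_st|_] := eqVneq (s i) (t i); last exact: leq_b1.
  by rewrite /snap /snap_at eq_st eqxx.
apply: leq_trans snap_le _.
under eq_bigr do rewrite sum_nat_const card_bool.
rewrite -big_distrr -card_set_sum /= -[4]/(2 * 2)%N -mulnA leq_mul2l.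
exact: card_neq_le_cayley_dist.
Qed.

Section Levels.
Variables (V Edg : finType) (src tgt : Edg -> V).

Definition level (f : V -> 'S_4) (P : 'S_4) : {set V} := [set v | f v == P].

Definition level_cut (f : V -> 'S_4) : nat :=
  cut_size src tgt (level f pi1) (level f pi2) (level f 1).

Lemma level_restrict (f : V -> 'S_4) (X Y Z : {set V}) P Q R :
  (forall v, v \in X -> f v = P) -> (forall v, v \in Y -> f v = Q) ->
  (forall v, v \in Z -> f v = R) -> Q != P -> R != P ->
  (X :|: Y :|: Z) :&: level f P = X.
Proof.
move=> fX fY fZ neqQP neqRP; apply/setP => v; rewrite !inE.
apply/idP/idP => [/andP[/orP[/orP[//|/fY->] | /fZ->]] | vX].
- by rewrite (negbTE neqQP).
- by rewrite (negbTE neqRP).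
by rewrite vX (fX v vX) eqxx.
Qed.

Lemma levels_restrict (f : V -> 'S_4) (X Y Z : {set V}) :
  (forall v, v \in X -> f v = pi1) -> (forall v, v \in Y -> f v = pi2) ->
  (forall v, v \in Z -> f v = 1) ->
  [/\ (X :|: Y :|: Z) :&: level f pi1 = X, (X :|: Y :|: Z) :&: level f pi2 = Y
    & (X :|: Y :|: Z) :&: level f 1 = Z].
Proof.
move=> fX fY fZ; have /and3P[n12 n1 n2] := boundary_perms_distinct.
split; first by rewrite (level_restrict fX fY fZ) // eq_sym.
- by rewrite (setUC X) (level_restrict fY fX fZ) // eq_sym.
by rewrite setUC setUA (level_restrict fZ fX fY).
Qed.

Lemma is_tripartition_level (f : V -> 'S_4) (A B C : {set V}) :
  (forall v, f v \in boundary_perms) -> (forall v, v \in A -> f v = pi1) ->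
  (forall v, v \in B -> f v = pi2) -> (forall v, v \in C -> f v = 1) ->
  is_tripartition A B C (level f pi1) (level f pi2) (level f 1).
Proof.
move=> f_bp fA fB fC; have /and3P[n12 n1 n2] := boundary_perms_distinct.
have disj P Q : P != Q -> [disjoint level f P & level f Q].
  move=> neqPQ; rewrite -setI_eq0; apply/eqP/setP => v; rewrite !inE.
  by apply/negP => /andP[/eqP-> /eqP eqPQ]; rewrite eqPQ eqxx in neqPQ.
split; rewrite ?disj //; last exact: levels_restrict.
by apply/setP => v; have := f_bp v; rewrite !inE orbA.
Qed.

Lemma levels_tripartition (f : V -> 'S_4) (A B C GA GB GC : {set V}) :
  is_tripartition A B C GA GB GC -> (forall v, v \in GA -> f v = pi1) ->
  (forall v, v \in GB -> f v = pi2) -> (forall v, v \in GC -> f v = 1) ->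
  [/\ forall v, f v \in boundary_perms,
      level f pi1 = GA, level f pi2 = GB & level f 1 = GC].
Proof.
case=> _ _ _ cover _ fA fB fC; split.
- move=> v; have : v \in GA :|: GB :|: GC by rewrite cover.
  by rewrite !inE => /orP[/orP[/fA|/fB]|/fC] ->; rewrite eqxx ?orbT.
all: by have [] := levels_restrict fA fB fC; rewrite cover !setTI.
Qed.

Lemma level_cut_sum (f : V -> 'S_4) : (forall v, f v \in boundary_perms) ->
  level_cut f = \sum_e (f (src e) != f (tgt e)).
Proof.
move=> f_bp; rewrite /level_cut /cut_size -card_set_sum; apply: eq_card => e.
rewrite !inE; have [<- | neq] := eqVneq (f (src e)) (f (tgt e)).
  by have := f_bp (src e); rewrite !inE !andbb => ->.
by apply: congr1; apply/negbTE; apply: contra neq => /or3P[] /andP[/eqP-> /eqP->].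
Qed.

Lemma energy_level (f : V -> 'S_4) : (forall v, f v \in boundary_perms) ->
  energy src tgt f = (2 * level_cut f)%N.
Proof.
move=> f_bp; rewrite level_cut_sum // big_distrr /=.
by apply: eq_bigr => e _; rewrite cayley_dist_boundary.
Qed.

Lemma sum_level_cut_snap_le (pi : V -> 'S_4) :
  \sum_k level_cut (snap k \o pi) <= 4 * energy src tgt pi.
Proof.
rewrite /energy big_distrr /=.
rewrite (eq_bigr _ (fun k _ => level_cut_sum (fun v => snap_in k (pi v)))) exchange_big.
by apply: leq_sum => e _; exact: sum_snap_neq_le.
Qed.

End Levels.

Lemma minimal_tripartition_cut_eq (V Edg : finType) (src tgt : Edg -> V)
    (A B C GA GB GC GA' GB' GC' : {set V}) :
  minimal_tripartition src tgt A B C GA GB GC ->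
  is_tripartition A B C GA' GB' GC' ->
  cut_size src tgt GA' GB' GC' = cut_size src tgt GA GB GC ->
  minimal_tripartition src tgt A B C GA' GB' GC'.
Proof.
by move=> [_ minG] trip' eq_cut; split=> // GA'' GB'' GC'' /minG; rewrite eq_cut.
Qed.

Section Configuration.
Variables (V Edg : finType) (src tgt : Edg -> V) (A B C : {set V}) (pi : V -> 'S_4).
Hypotheses (hA : forall v, v \in A -> pi v = pi1) (hB : forall v, v \in B -> pi v = pi2)
  (hC : forall v, v \in C -> pi v = 1).

Lemma is_tripartition_snap k :
  is_tripartition A B C (level (snap k \o pi) pi1) (level (snap k \o pi) pi2)
    (level (snap k \o pi) 1).
Proof.
apply: is_tripartition_level => [v|v /hA|v /hB|v /hC] /=; first exact: snap_in.
all: by move=> ->; apply: snap_boundary; rewrite !inE eqxx ?orbT.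
Qed.

Lemma min_cut_le_sum_snap (GA GB GC : {set V}) :
  minimal_tripartition src tgt A B C GA GB GC ->
  8 * cut_size src tgt GA GB GC <= \sum_k level_cut src tgt (snap k \o pi)
    ?= iff [forall k, cut_size src tgt GA GB GC == level_cut src tgt (snap k \o pi)].
Proof.
case=> _ minG; have <- : #|{: 'I_4 * bool}| = 8 by rewrite card_prod card_ord card_bool.
exact: card_mul_le_sum (fun k => minG _ _ _ (is_tripartition_snap k)).
Qed.

Lemma pinned_of_snap_levels (G : {set V}) P : P \in boundary_perms ->
  (forall k, level (snap k \o pi) P = G) -> forall v, v \in G -> pi v = P.
Proof.
move=> bP levelG v vG; apply: (@snap_const (pi v) P bP) => k.
by move: vG; rewrite -(levelG k) inE => /eqP.
Qed.

End Configuration.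

Lemma energy_pinned (V Edg : finType) (src tgt : Edg -> V) (pi : V -> 'S_4)
    (A B C GA GB GC : {set V}) :
  is_tripartition A B C GA GB GC -> (forall v, v \in GA -> pi v = pi1) ->
  (forall v, v \in GB -> pi v = pi2) -> (forall v, v \in GC -> pi v = 1) ->
  energy src tgt pi = (2 * cut_size src tgt GA GB GC)%N.
Proof.
move=> tripG pA pB pC; have [pi_bp <- <- <-] := levels_tripartition tripG pA pB pC.
exact: energy_level.
Qed.

Theorem mainTheorem6 (V Edg : finType) (src tgt : Edg -> V)
  (no_loops : forall e, src e != tgt e)
  (A B C : {set V})
  (dAB : [disjoint A & B]) (dAC : [disjoint A & C]) (dBC : [disjoint B & C])
  (pi : V -> 'S_4)
  (hA : forall v, v \in A -> pi v = pi1)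
  (hB : forall v, v \in B -> pi v = pi2)
  (hC : forall v, v \in C -> pi v = 1%g)
  (GA GB GC : {set V})
  (hmin : minimal_tripartition src tgt A B C GA GB GC) :
  (2 * cut_size src tgt GA GB GC <= energy src tgt pi)%N /\
  ((forall GA' GB' GC', minimal_tripartition src tgt A B C GA' GB' GC' ->
      [/\ GA' = GA, GB' = GB & GC' = GC]) ->
   (energy src tgt pi = (2 * cut_size src tgt GA GB GC)%N <->
    [/\ forall v, v \in GA -> pi v = pi1,
        forall v, v \in GB -> pi v = pi2
      & forall v, v \in GC -> pi v = 1%g])).
Proof.
have [le_sum eq_sum] := min_cut_le_sum_snap hA hB hC hmin.
have sum_le := sum_level_cut_snap_le src tgt pi.
split; first lia.
move=> uniqG; split => [energyE | [pA pB pC]]; last exact: energy_pinned hmin.1 pA pB pC.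
have /forallP cut_eq : [forall k, cut_size src tgt GA GB GC
                                  == level_cut src tgt (snap k \o pi)].
  by rewrite -eq_sum eqn_leq le_sum; lia.
have levels k := uniqG _ _ _ (minimal_tripartition_cut_eq hmin
  (is_tripartition_snap hA hB hC k) (esym (eqP (cut_eq k)))).
split; apply: pinned_of_snap_levels => [|k]; rewrite ?inE ?eqxx ?orbT //.
all: by case: (levels k).
Qed.
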